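(* Let $X$ be a connected graph of degree $d$, and let $G$ be a group acting transitively by graph automorphisms on the vertex set of $X$. Let $G'<G$ be a subgroup of finite index $m$, and let $X'$ be a $G'$-orbit of vertices. Then $X'$ is the vertex set of some $G'$-invariant graph of degree at most $d^{2m+1}$ such that the inclusion of $X'$ (with its graph metric) into $X$ (with its graph metric) is an $(O(m),O(m))$-quasi-isometry, the implied constants being universal.
   Context: A $(C,K)$-quasi-isometry $f:X\to Y$ between metric spaces satisfies $C^{-1}d(x,y)-K\le d(f(x),f(y))\le Cd(x,y)+K$ for all $x,y$, and every point of $Y$ is within distance $K$ of $f(X)$. *)

From Stdlib Require Import Reals Lra List.
Open Scope R_scope.

Definition simple_graph {V : Type} (E : V -> V -> Prop) : Prop :=
  (forall v w, E v w -> E w v) /\ (forall v, ~ E v v).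

Inductive walk {V : Type} (E : V -> V -> Prop) : nat -> V -> V -> Prop :=
| walk_nil : forall x, walk E 0 x x
| walk_cons : forall n x y z, E x y -> walk E n y z -> walk E (S n) x z.

Definition connected_graph {V : Type} (E : V -> V -> Prop) : Prop :=
  forall v w, exists n, walk E n v w.

Definition graph_dist {V : Type} (E : V -> V -> Prop) (x y : V) (k : nat) : Prop :=
  walk E k x y /\ forall j, walk E j x y -> (k <= j)%nat.

Definition regular_of_degree {V : Type} (E : V -> V -> Prop) (d : nat) : Prop :=
  forall v, exists l : list V, NoDup l /\ length l = d /\ (forall w, E v w <-> In w l).

Definition degree_at_most {V : Type} (P : V -> Prop) (E : V -> V -> Prop) (D : nat) : Prop :=
  forall v, P v -> exists l : list V, (length l <= D)%nat /\ (forall w, E v w -> In w l).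

Definition is_group {G : Type} (mul : G -> G -> G) (one : G) (inv : G -> G) : Prop :=
  (forall a b c, mul a (mul b c) = mul (mul a b) c) /\
  (forall a, mul one a = a) /\ (forall a, mul a one = a) /\
  (forall a, mul (inv a) a = one) /\ (forall a, mul a (inv a) = one).

Definition is_subgroup {G : Type} (mul : G -> G -> G) (one : G) (inv : G -> G)
  (H : G -> Prop) : Prop :=
  H one /\ (forall a b, H a -> H b -> H (mul a b)) /\ (forall a, H a -> H (inv a)).

(* H has index exactly m in G: there are exactly m left cosets r H,
   with representatives listed (without repetition of cosets) in reps *)
Definition has_index {G : Type} (mul : G -> G -> G) (one : G) (inv : G -> G)
  (H : G -> Prop) (m : nat) : Prop :=
  exists reps : list G, length reps = m /\
    (forall g, exists r, In r reps /\ H (mul (inv r) g)) /\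
    (forall i j, (i < m)%nat -> (j < m)%nat ->
       H (mul (inv (nth i reps one)) (nth j reps one)) -> i = j).

Definition action_by_automorphisms {G V : Type} (mul : G -> G -> G) (one : G)
  (act : G -> V -> V) (E : V -> V -> Prop) : Prop :=
  (forall v, act one v = v) /\
  (forall g h v, act (mul g h) v = act g (act h v)) /\
  (forall g v w, E v w <-> E (act g v) (act g w)).

Definition transitive_action {G V : Type} (act : G -> V -> V) : Prop :=
  forall v w, exists g, act g v = w.

Definition is_orbit {G V : Type} (act : G -> V -> V) (H : G -> Prop) (P : V -> Prop) : Prop :=
  exists x0, forall v, P v <-> exists h, H h /\ act h x0 = v.

Definition invariant_graph_on {G V : Type} (act : G -> V -> V) (H : G -> Prop)
  (P : V -> Prop) (E' : V -> V -> Prop) : Prop :=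
  simple_graph E' /\ (forall v w, E' v w -> P v /\ P w) /\
  (forall h v w, H h -> (E' v w <-> E' (act h v) (act h w))).

(* The inclusion of (P, graph metric of E') into (V, graph metric of E) is a
   (C,K)-quasi-isometry.  Both metrics are required to be finite (the first
   conjunct includes that P is connected in E'). *)
Definition qi_inclusion {V : Type} (P : V -> Prop) (E' E : V -> V -> Prop) (C K : R) : Prop :=
  (forall x y, P x -> P y -> exists k' k : nat,
      graph_dist E' x y k' /\ graph_dist E x y k /\
      / C * INR k' - K <= INR k /\ INR k <= C * INR k' + K) /\
  (forall v, exists x, P x /\ exists k : nat, walk E k x v /\ INR k <= K).

(* Every vertex lies within distance m - 1 of the orbit X': along a shortest
   path from X' to a vertex the distance to X' increases by one at each step,
   while it is constant on each of the m orbits of G' (which are the G'-orbits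
   of r^-1 x0 for coset representatives r).  Joining two points of X' whenever
   they are at distance at most 2m - 1 in X therefore gives a G'-invariant
   graph in which neighbouring vertices of a path of X project to equal or
   adjacent points of X'; its degree is bounded by counting the endpoints of
   walks of length 2m - 1 and 2m. *)
From Stdlib Require Import Reals List.
From Stdlib Require Import Lia Lra Classical Arith Wf_nat.
Open Scope R_scope.

Lemma ex_least_nat (Q : nat -> Prop) :
  (exists n, Q n) -> exists n, Q n /\ forall j, Q j -> (n <= j)%nat.
Proof.
  intros HQ.
  destruct (dec_inh_nat_subset_has_unique_least_element Q (fun n => classic (Q n)) HQ)
    as [n [[Qn Hmin] _]].
  eauto.
Qed.

Section Walks.

Variables (V : Type) (E : V -> V -> Prop).

Lemma walk_app a x y : walk E a x y -> forall b z, walk E b y z -> walk E (a + b) x z.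
Proof. induction 1; intros; simpl; auto. econstructor; eauto. Qed.

Lemma walk_snoc n x y z : walk E n x y -> E y z -> walk E (S n) x z.
Proof.
  intros Wxy Eyz. replace (S n) with (n + 1)%nat by lia.
  apply walk_app with y; auto. econstructor; eauto. constructor.
Qed.

Lemma walk_unsnoc n x z : walk E (S n) x z -> exists y, walk E n x y /\ E y z.
Proof.
  revert x. induction n; intros x W; inversion W as [|n' x' y' z' Exy Wyz]; subst.
  - inversion Wyz; subst. exists x. split; [constructor | auto].
  - destruct (IHn _ Wyz) as [w [Ww Ewz]]. exists w. split; auto. econstructor; eauto.
Qed.

Lemma walk_sym : (forall a b, E a b -> E b a) ->
  forall n x y, walk E n x y -> walk E n y x.
Proof. intros Esym. induction 1; [constructor | eapply walk_snoc; eauto]. Qed.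

Lemma walk_map (f : V -> V) : (forall v w, E v w -> E (f v) (f w)) ->
  forall n x y, walk E n x y -> walk E n (f x) (f y).
Proof. intros Ef. induction 1; [constructor | econstructor; eauto]. Qed.

(* Go back and forth [t] times along an edge at the start. *)
Lemma walk_pad : (forall a b, E a b -> E b a) ->
  forall t j v w u, walk E j v w -> E v u -> walk E (j + 2 * t) v w.
Proof.
  intros Esym. induction t; intros j v w u W Evu.
  - rewrite Nat.add_0_r; auto.
  - replace (j + 2 * S t)%nat with (S (S (j + 2 * t))) by lia.
    econstructor; [exact Evu |]. econstructor; [apply Esym; exact Evu |]. eauto.
Qed.

Lemma list_union_bound (F : V -> V -> Prop) (b : nat) :
  (forall y, exists L, (length L <= b)%nat /\ forall w, F y w -> In w L) ->
  forall l : list V, exists L, (length L <= length l * b)%nat /\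
    forall y w, In y l -> F y w -> In w L.
Proof.
  intros HF. induction l as [|y l [L [HL HinL]]].
  - exists nil. simpl. split; [lia | tauto].
  - destruct (HF y) as [Ly [HLy HinLy]]. exists (Ly ++ L).
    rewrite length_app. simpl. split; [lia |].
    intros y' w [<- | Hy'] Fw; apply in_or_app; eauto.
Qed.

Lemma walk_endpoints_le_pow d : regular_of_degree E d ->
  forall n v, exists L, (length L <= d ^ n)%nat /\ forall w, walk E n v w -> In w L.
Proof.
  intros Ereg. induction n; intro v.
  - exists (v :: nil). simpl. split; [lia |].
    intros w W. inversion W; subst. left; auto.
  - destruct (Ereg v) as [l [_ [Hl Hnb]]].
    destruct (list_union_bound (walk E n) (d ^ n) IHn l) as [L [HL HinL]].
    exists L. split; [simpl; rewrite Hl in HL; exact HL |].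
    intros w W. inversion W as [|n' x' y w' Evy Wyw]; subst.
    apply (HinL y); auto. apply Hnb; auto.
Qed.

(* A 1-regular connected component is a single edge. *)
Lemma walk_one_regular : (forall a b, E a b -> E b a) -> regular_of_degree E 1 ->
  forall n x z, walk E n x z -> z = x \/ E x z.
Proof.
  intros Esym Ereg. induction 1 as [|n x y z Exy Wyz IH]; [left; auto |].
  destruct IH as [-> | Eyz]; [right; auto |].
  left. destruct (Ereg y) as [l [_ [Hl Hnb]]].
  apply Hnb in Eyz. assert (Hx : In x l) by (apply Hnb, Esym; auto).
  destruct l as [|a [|b l]]; simpl in *; try lia.
  destruct Eyz as [<- | []]; destruct Hx as [<- | []]; auto.
Qed.

Definition dist_to_set (P : V -> Prop) (v : V) (k : nat) : Prop :=
  (exists p, P p /\ walk E k p v) /\ forall p j, P p -> walk E j p v -> (k <= j)%nat.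

Lemma dist_to_set_exists (P : V -> Prop) p n v :
  P p -> walk E n p v -> exists k, dist_to_set P v k.
Proof.
  intros Pp W.
  destruct (ex_least_nat (fun k => exists p, P p /\ walk E k p v)) as [k [Hk Hmin]]; eauto.
  exists k. split; auto. intros q j Pq Wq. apply Hmin; eauto.
Qed.

Lemma dist_to_set_unique P v k j : dist_to_set P v k -> dist_to_set P v j -> k = j.
Proof.
  intros [[p [Pp Wp]] Mk] [[q [Pq Wq]] Mj].
  specialize (Mk _ _ Pq Wq). specialize (Mj _ _ Pp Wp). lia.
Qed.

Lemma dist_to_set_pred P v k : dist_to_set P v (S k) -> exists u, dist_to_set P u k.
Proof.
  intros [[p [Pp Wp]] M]. destruct (walk_unsnoc _ _ _ Wp) as [u [Wu Euv]].
  exists u. split; eauto. intros q j Pq Wq.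
  assert (S k <= S j)%nat by (apply (M q); auto; eapply walk_snoc; eauto). lia.
Qed.

Definition dense_set (r : nat) (P : V -> Prop) : Prop :=
  forall v, exists p j, P p /\ (j <= r)%nat /\ walk E j p v.

End Walks.

Arguments walk_app {V E a x y}.
Arguments walk_sym {V E}.
Arguments walk_pad {V E}.

Section LevelCounting.

Variables (V A : Type) (D : V -> nat -> Prop) (lab : V -> A -> Prop).
Hypothesis lab_total : forall v, exists a, lab v a.
Hypothesis D_lab : forall v w a k j, lab v a -> lab w a -> D v k -> D w j -> k = j.
Hypothesis D_pred : forall v k, D v (S k) -> exists u, D u k.

Lemma level_labels k : forall v, D v k -> exists l, length l = S k /\ NoDup l /\
  forall a, In a l -> exists w j, (j <= k)%nat /\ D w j /\ lab w a.
Proof.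
  induction k; intros v Dv; destruct (lab_total v) as [a Hva].
  - exists (a :: nil). split; [reflexivity |]. split.
    + constructor; [simpl; tauto | constructor].
    + intros a' [<- | []]. exists v, 0%nat. auto.
  - destruct (D_pred _ _ Dv) as [u Du].
    destruct (IHk u Du) as [l [Hl [Hnd Hlab]]].
    exists (a :: l). split; [simpl; lia |]. split.
    + constructor; auto. intro Hin. destruct (Hlab a Hin) as [w [j [Hj [Dw Hwa]]]].
      assert (j = S k) by (apply (D_lab w v a); auto). lia.
    + intros a' [<- | Ha'].
      * exists v, (S k). auto.
      * destruct (Hlab a' Ha') as [w [j [Hj [Dw Hwa]]]]. exists w, j. split; [lia | auto].
Qed.

Lemma level_lt_labels (reps : list A) : (forall v a, lab v a -> In a reps) ->
  forall v k, D v k -> (k < length reps)%nat.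
Proof.
  intros Hreps v k Dv. destruct (level_labels k v Dv) as [l [Hl [Hnd Hlab]]].
  assert (incl l reps).
  { intros a Ha. destruct (Hlab a Ha) as [w [j [_ [_ Hwa]]]]. eauto. }
  pose proof (NoDup_incl_length Hnd H). lia.
Qed.

End LevelCounting.

Section NetGraph.

Variables (V : Type) (E : V -> V -> Prop) (P : V -> Prop) (s : nat).
Hypothesis Esym : forall v w, E v w -> E w v.

Definition net_graph (v w : V) : Prop :=
  P v /\ P w /\ v <> w /\ exists j, (j <= s)%nat /\ walk E j v w.

Lemma net_graph_simple : simple_graph net_graph.
Proof.
  split.
  - intros v w [Pv [Pw [Hne [j [Hj W]]]]]. repeat split; auto.
    exists j. split; auto. apply walk_sym; auto.
  - intros v [_ [_ [Hne _]]]. auto.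
Qed.

Lemma net_graph_degree_ne1 d : regular_of_degree E d -> d <> 1%nat -> (1 <= s)%nat ->
  degree_at_most P net_graph (d ^ (s + 2)).
Proof.
  intros Ereg Hd1 Hs v Pv.
  destruct (walk_endpoints_le_pow V E d Ereg s v) as [L1 [HL1 HIn1]].
  destruct (walk_endpoints_le_pow V E d Ereg (S s) v) as [L2 [HL2 HIn2]].
  exists (L1 ++ L2). split.
  - rewrite length_app. replace (s + 2)%nat with (S (S s)) by lia.
    rewrite !Nat.pow_succ_r' in *. destruct (Nat.eq_dec d 0) as [-> | Hd0].
    + rewrite Nat.pow_0_l in HL1 by lia. lia.
    + assert (2 <= d)%nat by lia. nia.
  - intros w [_ [_ [Hne [j [Hj W]]]]].
    destruct j as [|j]; [inversion W; subst; congruence |].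
    inversion W as [|n' x' u w' Evu Wuw].
    (* Pad the walk to length s or s + 1, whichever has the right parity. *)
    destruct (Nat.Even_or_Odd (S s - S j)) as [[t Ht] | [t Ht]]; apply in_or_app.
    + right. apply HIn2. replace (S s) with (S j + 2 * t)%nat by lia. eapply walk_pad; eauto.
    + left. apply HIn1. replace s with (S j + 2 * t)%nat by lia. eapply walk_pad; eauto.
Qed.

Lemma net_graph_degree d : regular_of_degree E d -> (1 <= s)%nat ->
  degree_at_most P net_graph (d ^ (s + 2)).
Proof.
  intros Ereg Hs. destruct (Nat.eq_dec d 1) as [-> | Hd1].
  - intros v _. destruct (Ereg v) as [l [_ [Hl Hnb]]]. exists l.
    split; [rewrite Nat.pow_1_l; lia |].
    intros w [_ [_ [Hne [j [_ W]]]]]. apply Hnb.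
    destruct (walk_one_regular V E Esym Ereg _ _ _ W) as [-> | ]; [congruence | auto].
  - apply net_graph_degree_ne1; auto.
Qed.

Variable r : nat.
Hypothesis P_dense : dense_set V E r P.
Hypothesis radius_le : (2 * r + 1 <= s)%nat.

(* Project each vertex of the path to a point of P within distance r:
   consecutive projections are at distance at most 2r + 1. *)
Lemma walk_net_graph_lift n a y : walk E n a y -> P y ->
  forall p j, P p -> (j <= r)%nat -> walk E j p a ->
  exists k, (k <= S n)%nat /\ walk net_graph k p y.
Proof.
  induction 1 as [a | n a b y Eab Wby IH]; intros Py p j Pp Hj Wpa.
  - destruct (classic (p = a)) as [<- | Hne].
    + exists 0%nat. split; [lia | constructor].
    + exists 1%nat. split; [lia |]. econstructor; [| constructor].
      repeat split; auto. exists j. split; [lia | auto].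
  - destruct (P_dense b) as [q [i [Pq [Hi Wqb]]]].
    destruct (IH Py q i Pq Hi Wqb) as [k [Hk Wk]].
    destruct (classic (p = q)) as [<- | Hne].
    + exists k. split; [lia | auto].
    + exists (S k). split; [lia |]. econstructor; [| exact Wk].
      repeat split; auto. exists (j + S i)%nat. split; [lia |].
      apply (walk_app Wpa). econstructor; [exact Eab | apply walk_sym; auto].
Qed.

Lemma walk_net_graph_unfold k x y : walk net_graph k x y ->
  exists n, (n <= s * k)%nat /\ walk E n x y.
Proof.
  induction 1 as [x | k x y z Exy Wyz IH].
  - exists 0%nat. split; [lia | constructor].
  - destruct IH as [n [Hn Wn]]. destruct Exy as [_ [_ [_ [j [Hj Wj]]]]].
    exists (j + n)%nat. split; [nia | exact (walk_app Wj _ _ Wn)].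
Qed.

Lemma net_graph_qi (C : R) : connected_graph E -> INR (S s) <= C ->
  qi_inclusion P net_graph E C C.
Proof.
  intros Econn HC.
  assert (HsC : INR s <= C) by (rewrite S_INR in HC; lra).
  assert (H1C : 1 <= C) by (rewrite S_INR in HC; pose proof (pos_INR s); lra).
  split.
  - intros x y Px Py.
    destruct (Econn x y) as [n Wn].
    destruct (ex_least_nat (fun k => walk E k x y)) as [k [Wk Mk]]; eauto.
    destruct (walk_net_graph_lift k x y Wk Py x 0 Px ltac:(lia) (walk_nil E x))
      as [k1 [Hk1 Wk1]].
    destruct (ex_least_nat (fun k => walk net_graph k x y)) as [k' [Wk' Mk']]; eauto.
    exists k', k. split; [split; auto |]. split; [split; auto |].
    assert (Hk' : INR k' <= INR k + 1).
    { rewrite <- S_INR. apply le_INR. specialize (Mk' _ Wk1). lia. }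
    destruct (walk_net_graph_unfold _ _ _ Wk') as [n' [Hn' Wn']].
    assert (Hk : INR k <= INR s * INR k').
    { rewrite <- mult_INR. apply le_INR. specialize (Mk _ Wn'). lia. }
    pose proof (pos_INR k'). pose proof (pos_INR k).
    assert (/ C <= 1) by (rewrite <- Rinv_1; apply Rinv_le_contravar; lra).
    assert (0 < / C) by (apply Rinv_0_lt_compat; lra).
    split; nra.
  - intro v. destruct (P_dense v) as [p [j [Pp [Hj Wj]]]]. exists p. split; auto.
    exists j. split; auto. assert (INR j <= INR s) by (apply le_INR; lia). lra.
Qed.

End NetGraph.

Section OrbitNet.

Variables (V G : Type) (E : V -> V -> Prop).
Variables (mul : G -> G -> G) (one : G) (inv : G -> G) (act : G -> V -> V).
Variables (H : G -> Prop) (P : V -> Prop) (x0 : V) (reps : list G).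
Hypothesis Ggroup : is_group mul one inv.
Hypothesis Gact : action_by_automorphisms mul one act E.
Hypothesis Gtrans : transitive_action act.
Hypothesis Hsub : is_subgroup mul one inv H.
Hypothesis reps_cover : forall g, exists r, In r reps /\ H (mul (inv r) g).
Hypothesis P_orbit : forall v, P v <-> exists h, H h /\ act h x0 = v.

Lemma act_invK g v : act (inv g) (act g v) = v.
Proof.
  destruct Ggroup as (_ & _ & _ & Glinv & _). destruct Gact as (Aone & Amul & _).
  rewrite <- Amul, Glinv, Aone. reflexivity.
Qed.

Lemma walk_act g n v w : walk E n v w -> walk E n (act g v) (act g w).
Proof. apply walk_map. intros. apply Gact; auto. Qed.

Lemma orbit_act h v : H h -> P v -> P (act h v).
Proof.
  destruct Gact as (_ & Amul & _). destruct Hsub as (_ & Hmul & _).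
  intros Hh Pv. apply P_orbit in Pv as [h' [Hh' <-]]. apply P_orbit.
  exists (mul h h'). rewrite Amul. auto.
Qed.

Lemma dist_to_orbit_act h v k : H h ->
  dist_to_set V E P v k -> dist_to_set V E P (act h v) k.
Proof.
  destruct Hsub as (_ & _ & Hinv).
  intros Hh [[p [Pp Wp]] M]. split.
  - exists (act h p). split; [apply orbit_act | apply walk_act]; auto.
  - intros q j Pq Wq. apply (M (act (inv h) q)); [apply orbit_act; auto |].
    rewrite <- (act_invK h v). apply walk_act; auto.
Qed.

(* [v] lies in the H-orbit of [r^-1 x0]; these orbits are the H-orbits of X. *)
Definition coset_label (v : V) (r : G) : Prop :=
  In r reps /\ exists h, H h /\ act h (act (inv r) x0) = v.

Lemma coset_label_total v : exists r, coset_label v r.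
Proof.
  destruct Ggroup as (Gassoc & _ & Gr1 & Glinv & _). destruct Gact as (_ & Amul & _).
  destruct Hsub as (_ & _ & Hinv).
  destruct (Gtrans x0 v) as [g <-]. destruct (reps_cover (inv g)) as [r [Hr Hrg]].
  exists r. split; auto. exists (inv (mul (inv r) (inv g))). split; auto.
  assert (Hx0 : act (inv r) x0 = act (mul (inv r) (inv g)) (act g x0)).
  { rewrite <- Amul, <- Gassoc, Glinv, Gr1. reflexivity. }
  rewrite Hx0. apply act_invK.
Qed.

Lemma coset_label_dist v w r k j : coset_label v r -> coset_label w r ->
  dist_to_set V E P v k -> dist_to_set V E P w j -> k = j.
Proof.
  destruct Gact as (_ & Amul & _). destruct Hsub as (_ & Hmul & Hinv).
  intros [_ [h1 [Hh1 <-]]] [_ [h2 [Hh2 <-]]] Dv Dw.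
  apply (dist_to_set_unique V E P (act h2 (act (inv r) x0))); auto.
  replace (act h2 (act (inv r) x0))
    with (act (mul h2 (inv h1)) (act h1 (act (inv r) x0)))
    by (rewrite Amul, act_invK; reflexivity).
  apply dist_to_orbit_act; auto.
Qed.

Lemma orbit_dense : connected_graph E -> dense_set V E (length reps - 1) P.
Proof.
  intros Econn v.
  assert (Px0 : P x0).
  { destruct Hsub as (H1 & _). destruct Gact as (Aone & _). apply P_orbit. eauto. }
  destruct (Econn x0 v) as [n Wn].
  destruct (dist_to_set_exists V E P x0 n v Px0 Wn) as [k Dk].
  assert (Hk : (k < length reps)%nat).
  { apply (level_lt_labels V G (dist_to_set V E P) coset_label coset_label_total
             coset_label_dist (dist_to_set_pred V E P) reps) with v; auto.
    intros w r [Hr _]. exact Hr. }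
  destruct Dk as [[p [Pp Wp]] _]. exists p, k. repeat split; auto; lia.
Qed.

Lemma net_graph_orbit_invariant s : (forall v w, E v w -> E w v) ->
  invariant_graph_on act H P (net_graph V E P s).
Proof.
  intros Esym. destruct Gact as (_ & _ & Aaut). destruct Hsub as (_ & _ & Hinv).
  assert (Hfwd : forall g v w, H g ->
            net_graph V E P s v w -> net_graph V E P s (act g v) (act g w)).
  { intros g v w Hg [Pv [Pw [Hne [j [Hj Wj]]]]].
    repeat split; try apply orbit_act; auto.
    - intro Heq. apply Hne. rewrite <- (act_invK g v), <- (act_invK g w), Heq. reflexivity.
    - exists j. split; auto. apply walk_act; auto. }
  split; [apply net_graph_simple; auto |]. split.
  - intros v w [Pv [Pw _]]. auto.
  - intros h v w Hh. split; [apply Hfwd; auto |].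
    intro Hvw. rewrite <- (act_invK h v), <- (act_invK h w). apply Hfwd; auto.
Qed.

End OrbitNet.

Theorem lemma2p4p1 :
  exists C : R, 0 < C /\
  forall (V : Type) (E : V -> V -> Prop) (d : nat)
    (G : Type) (mul : G -> G -> G) (one : G) (inv : G -> G) (act : G -> V -> V)
    (H : G -> Prop) (m : nat) (P : V -> Prop),
    simple_graph E -> connected_graph E -> regular_of_degree E d ->
    is_group mul one inv ->
    action_by_automorphisms mul one act E -> transitive_action act ->
    is_subgroup mul one inv H -> has_index mul one inv H m ->
    is_orbit act H P ->
    exists E' : V -> V -> Prop,
      invariant_graph_on act H P E' /\
      degree_at_most P E' (d ^ (2 * m + 1)) /\
      qi_inclusion P E' E (C * INR m) (C * INR m).
Proof.
  exists 2. split; [lra |].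
  intros V E d G mul one inv act H m P [Esym _] Econn Ereg Ggroup Gact Gtrans Hsub
    [reps [Hlen [Hcover _]]] [x0 Porbit].
  assert (Hm : (1 <= m)%nat).
  { destruct (Hcover one) as [r [Hr _]]. destruct reps; simpl in *; [contradiction | lia]. }
  exists (net_graph V E P (2 * m - 1)). split; [| split].
  - eapply net_graph_orbit_invariant; eauto.
  - replace (2 * m + 1)%nat with (2 * m - 1 + 2)%nat by lia.
    apply net_graph_degree; auto. lia.
  - apply net_graph_qi with (m - 1)%nat; auto; try lia.
    + rewrite <- Hlen. eapply orbit_dense; eauto.
    + replace (S (2 * m - 1)) with (2 * m)%nat by lia. rewrite mult_INR. simpl. lra.
Qed.
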